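(* A cluster transformation $\mathbf K:\mathbf q\to\mathbf q$ is a cluster Donaldson–Thomas transformation of $\mathbf q$ if and only if $F(\mathbf K):-\mathbf q\to-\mathbf q$ is a cluster Donaldson–Thomas transformation of $-\mathbf q$.
   Context: For a quiver $\mathbf q$ with exchange matrix $\varepsilon$, $-\mathbf q$ is the quiver with matrix $-\varepsilon$ (all arrows reversed). A cluster transformation $\sigma:\mathbf q\to\mathbf q'$ is a finite sequence of mutations $\mu_k$ and relabelings; $I(\sigma):-\mathbf q\to-\mathbf q'$ is the same sequence applied to $-\mathbf q$, and $F(\sigma):=I(\sigma^{-1}):-\mathbf q'\to-\mathbf q$, where $\sigma^{-1}$ is the reverse sequence. Tropical coordinates of a quiver with vertex set $I$ are $\mathbb Z^I$; mutation acts by $x'_k=-x_k$, $x'_i=x_i-\varepsilon_{ik}\min\{0,-\mathrm{sgn}(\varepsilon_{ik})x_k\}$, relabeling by permuting coordinates. The $C$-matrix $C_\sigma$ has $j$-th column the image of the $j$-th unit vector (basic positive lamination $l^+_{\mathbf q,j}$) under the tropicalized map of $\sigma$. A cluster Donaldson–Thomas transformation of $\mathbf q$ is a cluster transformation $\mathbf K:\mathbf q\to\mathbf q$ with $C_{\mathbf K}=-\mathrm{Id}$. *)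

From HB Require Import structures.
From mathcomp Require Import all_boot all_order all_algebra all_fingroup.
Set Implicit Arguments. Unset Strict Implicit. Unset Printing Implicit Defensive.
Import Order.TTheory GRing.Theory Num.Theory.
Local Open Scope ring_scope.

(* A quiver on vertex set 'I_n is given by its (skew-symmetric) integer
   exchange matrix eps : 'M[int]_n;  -q corresponds to -eps. *)

(* Matrix mutation at k (Fock--Goncharov convention):
   eps'_{ij} = -eps_{ij} if k \in {i,j},
             = eps_{ij} + sgn(eps_{ik}) max(0, eps_{ik} eps_{kj}) otherwise
   (equivalently eps_{ij} + (|eps_ik| eps_kj + eps_ik |eps_kj|)/2). *)
Definition mut_mx n (k : 'I_n) (e : 'M[int]_n) : 'M[int]_n :=
  \matrix_(i, j) if (i == k) || (j == k) then - e i j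
                 else e i j + Num.sg (e i k) * Num.max 0 (e i k * e k j).

(* Elementary steps of a cluster transformation: a mutation mu_k or a
   relabeling by a permutation s (vertex i of the old quiver becomes
   vertex s i of the new one). *)
Inductive cstep (n : nat) : Type :=
| Mu of 'I_n
| Relab of 'S_n.

Definition step_mx n (e : 'M[int]_n) (st : cstep n) : 'M[int]_n :=
  match st with
  | Mu k => mut_mx k e
  | Relab s => \matrix_(i, j) e ((s^-1)%g i) ((s^-1)%g j)
  end.

(* Tropicalized action of a step on tropical coordinates Z^I
   (column vectors), computed with the exchange matrix e before the step:
   x'_k = -x_k,  x'_i = x_i - e_{ik} min(0, -sgn(e_{ik}) x_k). *)
Definition step_trop n (e : 'M[int]_n) (st : cstep n) (x : 'cV[int]_n)
  : 'cV[int]_n :=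
  match st with
  | Mu k => \col_i (if i == k then - x k 0
                    else x i 0 - e i k * Num.min 0 (- Num.sg (e i k) * x k 0))
  | Relab s => \col_i x ((s^-1)%g i) 0
  end.

Definition ctrans n := seq (cstep n).

Fixpoint ctrans_mx n (e : 'M[int]_n) (l : ctrans n) : 'M[int]_n :=
  match l with
  | [::] => e
  | st :: l' => ctrans_mx (step_mx e st) l'
  end.

Fixpoint ctrans_trop n (e : 'M[int]_n) (l : ctrans n) (x : 'cV[int]_n)
  : 'cV[int]_n :=
  match l with
  | [::] => x
  | st :: l' => ctrans_trop (step_mx e st) l' (step_trop e st x)
  end.

Definition Cmat n (e : 'M[int]_n) (l : ctrans n) : 'M[int]_n :=
  \matrix_(i, j) ctrans_trop e l (delta_mx j ord0) i ord0.

(* inverse of a cluster transformation: reverse sequence, each step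
   inverted (mutations are involutive, relabelings inverted). *)
Definition inv_step n (st : cstep n) : cstep n :=
  match st with
  | Mu k => Mu k
  | Relab s => Relab (s^-1)%g
  end.

Definition ctrans_inv n (l : ctrans n) : ctrans n := rev (map (@inv_step n) l).

(* I(sigma) is the same sequence, applied to -q; F(sigma) := I(sigma^-1). *)
Definition Ftrans n (l : ctrans n) : ctrans n := ctrans_inv l.

Definition is_ctrans_to n (e : 'M[int]_n) (l : ctrans n) (e' : 'M[int]_n) :=
  ctrans_mx e l = e'.

Definition is_clusterDT n (e : 'M[int]_n) (K : ctrans n) : Prop :=
  is_ctrans_to e K e /\ Cmat e K = - 1%:M.

From HB Require Import structures.
From mathcomp Require Import all_boot all_order all_algebra all_fingroup.
Import GRing.Theory Num.Theory.
Local Open Scope ring_scope.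

(* Reversing all arrows conjugates every tropicalized step by [x |-> -x], and
   the steps of [sigma^-1] undo those of [sigma], so the tropical map of
   [F(sigma)] is [x |-> - T^-1 (- x)] with [T] the tropical map of [sigma].
   Hence [T] sends each unit vector to its opposite iff that map does. *)

Lemma step_mxN n (e : 'M[int]_n) st : step_mx (- e) st = - step_mx e st.
Proof.
case: st => [k|s] /=; apply/matrixP => i j; rewrite !mxE //.
by case: ifP => // _; rewrite sgrN mulrNN opprD mulNr.
Qed.

Lemma step_tropN n (e : 'M[int]_n) st x :
  step_trop (- e) st x = - step_trop e st (- x).
Proof.
case: st => [k|s] /=; apply/matrixP => i j; rewrite !mxE ?opprK //.
by case: ifP => _; rewrite ?opprK // sgrN mulrNN mulNr opprD !opprK.
Qed.

Lemma ctrans_mxN n (e : 'M[int]_n) l : ctrans_mx (- e) l = - ctrans_mx e l.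
Proof. by elim: l e => [|st l IH] e //=; rewrite step_mxN IH. Qed.

Lemma ctrans_tropN n (e : 'M[int]_n) l x :
  ctrans_trop (- e) l x = - ctrans_trop e l (- x).
Proof.
elim: l e x => [|st l IH] e x /=; first by rewrite opprK.
by rewrite step_mxN step_tropN IH opprK.
Qed.

Lemma step_mxK n (e : 'M[int]_n) st : step_mx (step_mx e st) (inv_step st) = e.
Proof.
case: st => [k|s] /=; apply/matrixP => i j; rewrite !mxE.
  case: ifP => ijk; first by rewrite ijk opprK.
  by rewrite ijk eqxx orbT /= sgrN mulrNN mulNr addrK.
by rewrite !(permKV (s^-1)%g).
Qed.

Lemma step_tropK n (e : 'M[int]_n) st x :
  step_trop (step_mx e st) (inv_step st) (step_trop e st x) = x.
Proof.
case: st => [k|s] /=; apply/matrixP => i j; rewrite !mxE ord1.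
  case: ifP => ik; first by rewrite eqxx opprK (eqP ik).
  by rewrite ik eqxx /= sgrN [- Num.sg _ * _]mulNr [- e i k * _]mulNr
    !opprK mulrN subrK.
by rewrite !(permKV (s^-1)%g).
Qed.

Lemma ctrans_mx_cat n (e : 'M[int]_n) l1 l2 :
  ctrans_mx e (l1 ++ l2) = ctrans_mx (ctrans_mx e l1) l2.
Proof. by elim: l1 e => [|st l IH] e //=. Qed.

Lemma ctrans_trop_cat n (e : 'M[int]_n) l1 l2 x :
  ctrans_trop e (l1 ++ l2) x =
  ctrans_trop (ctrans_mx e l1) l2 (ctrans_trop e l1 x).
Proof. by elim: l1 e x => [|st l IH] e x //=. Qed.

Lemma ctrans_inv_cons n st (l : ctrans n) :
  ctrans_inv (st :: l) = ctrans_inv l ++ [:: inv_step st].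
Proof. by rewrite /ctrans_inv /= rev_cons cats1. Qed.

Lemma ctrans_invK n : involutive (@ctrans_inv n).
Proof.
move=> l; rewrite /ctrans_inv map_rev revK -map_comp -[RHS]map_id.
by apply: eq_map => -[k|s] //=; rewrite invgK.
Qed.

Lemma ctrans_mxK n (e : 'M[int]_n) l :
  ctrans_mx (ctrans_mx e l) (ctrans_inv l) = e.
Proof.
elim: l e => [|st l IH] e //=.
by rewrite ctrans_inv_cons ctrans_mx_cat IH /= step_mxK.
Qed.

Lemma ctrans_tropK n (e : 'M[int]_n) l :
  cancel (ctrans_trop e l) (ctrans_trop (ctrans_mx e l) (ctrans_inv l)).
Proof.
elim: l e => [|st l IH] e x //=.
by rewrite ctrans_inv_cons ctrans_trop_cat IH ctrans_mxK /= step_tropK.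
Qed.

Lemma ctrans_trop_invE n (e : 'M[int]_n) l x y :
  ctrans_trop e l x = y <-> ctrans_trop (ctrans_mx e l) (ctrans_inv l) y = x.
Proof.
split=> [<-|<-]; first exact: ctrans_tropK.
have := @ctrans_tropK n (ctrans_mx e l) (ctrans_inv l).
by rewrite ctrans_mxK ctrans_invK.
Qed.

Lemma CmatN1P n (e : 'M[int]_n) l :
  Cmat e l = - 1%:M <->
  forall j, ctrans_trop e l (delta_mx j ord0) = - delta_mx j ord0.
Proof.
split=> [C j|T].
  apply/matrixP => i z; rewrite [z]ord1.
  by have /matrixP/(_ i j) := C; rewrite !mxE => ->; rewrite eqxx andbT.
by apply/matrixP => i j; rewrite !mxE T !mxE eqxx andbT.
Qed.

Lemma Cmat_FtransN1 n (e : 'M[int]_n) l :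
  Cmat (- ctrans_mx e l) (Ftrans l) = - 1%:M <-> Cmat e l = - 1%:M.
Proof.
rewrite /Ftrans; split=> /CmatN1P T; apply/CmatN1P => j; move: (T j).
  by rewrite ctrans_tropN => /oppr_inj /(ctrans_trop_invE _ _ _ _ _).2.
by move/(ctrans_trop_invE _ _ _ _ _).1 => C; rewrite ctrans_tropN C.
Qed.

Theorem mainTheorem10 (n : nat) (e : 'M[int]_n) (K : ctrans n) :
  e^T = - e ->
  is_ctrans_to e K e ->
  (is_clusterDT e K <-> is_clusterDT (- e) (Ftrans K)).
Proof.
move=> _ Ke; rewrite /is_clusterDT /is_ctrans_to in Ke *.
have FKe : ctrans_mx (- e) (Ftrans K) = - e.
  by rewrite ctrans_mxN -{1}Ke ctrans_mxK.
have := Cmat_FtransN1 n e K; rewrite Ke FKe => CF.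
by split=> -[_ C]; split=> //; [apply: CF.2 | apply: CF.1].
Qed.
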